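(* For $\varepsilon>0$ let $\alpha(\varepsilon)=\inf_{0<x<\min\{\varepsilon,1\}}(x-x^3)^{-2/3}$, which equals $(\varepsilon-\varepsilon^3)^{-2/3}$ if $\varepsilon\le3^{-1/2}$ and $3\cdot2^{-2/3}=1.8898\ldots$ otherwise. Then for every $\varepsilon>0$, $$\max_{1\le k\le n}\sigma_k^2\le\alpha(\varepsilon)\sup_{0<x\le\varepsilon}\big(xL_n(x)\big)^{2/3}.$$
   Context: $X_1,\dots,X_n$ are independent real random variables with $\mathbb E X_k=0$, $\sigma_k^2=\mathbb E X_k^2<\infty$, normalized so that $\sum_{k=1}^n\sigma_k^2=1$; $L_n(z)=\sum_{k=1}^n\mathbb E X_k^2\mathbf 1(|X_k|\ge z)$ for $z\ge0$. *)

From HB Require Import structures.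
From mathcomp Require Import all_boot all_order all_algebra.
From mathcomp Require Import all_classical all_reals all_analysis.
Set Implicit Arguments. Unset Strict Implicit. Unset Printing Implicit Defensive.
Import Order.TTheory GRing.Theory Num.Theory.
Local Open Scope classical_set_scope.
Local Open Scope ring_scope.

Definition mutually_independent {d} {T : measurableType d} {R : realType}
  (P : probability T R) (n : nat) (X : 'I_n -> {RV P >-> R}) : Prop :=
  forall (J : {set 'I_n}) (B : 'I_n -> set R),
    (forall i, measurable (B i)) ->
    P (\bigcap_(i in [set` mem J]) (X i @^-1` B i)) =
    (\prod_(i in J) P (X i @^-1` B i))%E.

Definition sigma2 {d} {T : measurableType d} {R : realType}
  (P : probability T R) (Y : T -> R) : R :=
  fine 'E_P[(fun w => Y w ^+ 2)].

Definition Lind {d} {T : measurableType d} {R : realType}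
  (P : probability T R) (n : nat) (X : 'I_n -> {RV P >-> R}) (z : R) : R :=
  \sum_(k < n)
    fine 'E_P[(fun w => X k w ^+ 2 * \1_[set w | z <= `|X k w|] w)].

Definition alpha {R : realType} (eps : R) : R :=
  inf [set (x - x ^+ 3) `^ (- (2 / 3)) | x in `]0, Num.min eps 1[].

From HB Require Import structures.
From mathcomp Require Import all_boot all_order all_algebra.
From mathcomp Require Import all_classical all_reals all_analysis.
From mathcomp Require Import measurable_realfun ring lra.
Import Order.TTheory GRing.Theory Num.Theory.
Local Open Scope classical_set_scope.
Local Open Scope ring_scope.

(* For every k and x > 0,
     sigma_k^2 <= x^2 + E[X_k^2 1(|X_k| >= x)] <= x^2 + L_n(x).
   Let s = max_k sigma_k^2 <= 1 and x = y sqrt s with 0 < y < min(eps, 1),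
   so that 0 < x <= eps.  Then x L_n(x) >= x (s - x^2) = s^(3/2) (y - y^3),
   i.e. s <= (y - y^3)^(-2/3) (x L_n(x))^(2/3); take the infimum over y. *)

Lemma ler_term_sum (R : numDomainType) (I : finType) (F : I -> R) (k : I) :
  (forall i, 0 <= F i) -> F k <= \sum_i F i.
Proof. by move=> F_ge0; rewrite (bigD1 k) //= lerDl sumr_ge0. Qed.

Lemma exprn_powR_divn {R : realType} (m n : nat) (t : R) :
  (0 < m)%N -> 0 <= t -> (t ^+ m) `^ (n%:R / m%:R) = t ^+ n.
Proof.
move=> m0 t0; rewrite -powR_mulrn // -powRrM mulrCA divff ?pnatr_eq0 -?lt0n //.
by rewrite mulr1 powR_mulrn.
Qed.

Section alpha.
Context (R : realType) (eps : R).
Hypothesis eps_gt0 : 0 < eps.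

Let m := Num.min eps 1.

Let m_gt0 : 0 < m. Proof. by rewrite lt_min eps_gt0 ltr01. Qed.

Let alpha_set_neq0 : [set (y - y ^+ 3) `^ (- (2 / 3)) | y in `]0, m[] !=set0.
Proof.
exists ((m / 2 - (m / 2) ^+ 3) `^ (- (2 / 3))), (m / 2) => //=.
by rewrite in_itv /=; apply/andP; split; have := m_gt0; lra.
Qed.

Lemma alpha_ge0 : 0 <= alpha eps.
Proof. by apply: lb_le_inf => // _ [y _ <-]; exact: powR_ge0. Qed.

Lemma le_alpha_mul (a b : R) : 0 <= b ->
  (forall y, y \in `]0, m[ -> a <= (y - y ^+ 3) `^ (- (2 / 3)) * b) ->
  a <= alpha eps * b.
Proof.
move=> b0 ha; have [_ [z z_itv _]] := alpha_set_neq0.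
have [b_eq0|b_neq0] := eqVneq b 0.
  by have := ha z z_itv; rewrite b_eq0 !mulr0.
have b_gt0 : 0 < b by rewrite lt_neqAle eq_sym b_neq0.
rewrite -ler_pdivrMr //; apply: lb_le_inf => // _ [y y_itv <-].
by rewrite ler_pdivrMr // ha.
Qed.

End alpha.

Section sup_bound.
Context (R : realType) (eps s : R) (L : R -> R).
Hypotheses (s_ge0 : 0 <= s) (s_le1 : s <= 1).
Hypothesis L_ge : forall x, 0 < x <= eps -> s - x ^+ 2 <= L x.
Let E := [set (x * L x) `^ (2 / 3) | x in `]0, eps]].
Hypothesis E_ub : has_ubound E.

Lemma le_powR_mul_sup y : 0 < s -> y \in `]0, Num.min eps 1[ ->
  s <= (y - y ^+ 3) `^ (- (2 / 3)) * sup E.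
Proof.
rewrite in_itv /= lt_min => s_gt0 /andP[y_gt0 /andP[y_lt_eps y_lt1]].
set c := y - y ^+ 3.
have c_gt0 : 0 < c by rewrite /c; nra.
set t := Num.sqrt s.
have t_gt0 : 0 < t by rewrite sqrtr_gt0.
have t_le1 : t <= 1 by rewrite -sqrtr1 ler_sqrt.
have t2 : t ^+ 2 = s by rewrite sqr_sqrtr.
set x := y * t.
have x_gt0 : 0 < x by rewrite mulr_gt0.
have x_le_eps : x <= eps by rewrite /x; nra.
have cube_le : t ^+ 3 * c <= x * L x.
  have -> : t ^+ 3 * c = x * (s - x ^+ 2) by rewrite -t2 /x /c; ring.
  by rewrite ler_wpM2l ?L_ge ?x_gt0 // ltW.
have pow_le : s * c `^ (2 / 3) <= (x * L x) `^ (2 / 3).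
  have t_ge0 := ltW t_gt0; have c_ge0 := ltW c_gt0.
  rewrite -t2 -(exprn_powR_divn 3 2 t isT t_ge0) -powRM ?exprn_ge0 //.
  have cube_ge0 : 0 <= t ^+ 3 * c by rewrite mulr_ge0 ?exprn_ge0.
  apply: (ge0_ler_powR _ _ _ cube_le) => //; rewrite nnegrE //.
  exact: le_trans cube_ge0 cube_le.
have x_in_E : E ((x * L x) `^ (2 / 3)) by exists x; rewrite //= in_itv /= x_gt0.
rewrite powRN mulrC ler_pdivlMr ?powR_gt0 //.
exact: le_trans pow_le (ub_le_sup E_ub x_in_E).
Qed.

Lemma le_alpha_mul_sup : 0 < eps -> s <= alpha eps * sup E.
Proof.
move=> eps_gt0.
have E_eps : E ((eps * L eps) `^ (2 / 3)).
  by exists eps; rewrite //= in_itv /= eps_gt0 lexx.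
have sup_ge0 : 0 <= sup E := le_trans (powR_ge0 _ _) (ub_le_sup E_ub E_eps).
have [->|s_neq0] := eqVneq s 0; first by rewrite mulr_ge0 ?alpha_ge0.
apply: le_alpha_mul => // y; apply: le_powR_mul_sup.
by rewrite lt_neqAle eq_sym s_neq0.
Qed.

End sup_bound.

Section tail_moment.
Context {R : realType} {d : measure_display} {T : measurableType d}
  (P : probability T R).

Definition tail_sqr (Y : T -> R) (x : R) (w : T) : R :=
  Y w ^+ 2 * \1_[set w | x <= `|Y w|] w.

Definition tail_moment (Y : T -> R) (x : R) : R := fine 'E_P[tail_sqr Y x].

Lemma sigma2_ge0 (Y : T -> R) : 0 <= sigma2 P Y.
Proof. by apply/fine_ge0/expectation_ge0 => w; rewrite sqr_ge0. Qed.

Lemma tail_sqr_ge0 (Y : T -> R) x w : 0 <= tail_sqr Y x w.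
Proof. by rewrite mulr_ge0 ?sqr_ge0 ?indic_ge0. Qed.

Lemma tail_sqr_le (Y : T -> R) x w : tail_sqr Y x w <= Y w ^+ 2.
Proof.
by rewrite /tail_sqr indicE; case: (_ \in _); rewrite ?mulr1 ?mulr0 ?sqr_ge0.
Qed.

Lemma sqr_le_tail_sqr (Y : T -> R) x w :
  0 <= x -> Y w ^+ 2 <= tail_sqr Y x w + x ^+ 2.
Proof.
move=> x0; rewrite /tail_sqr indicE; have [xY|Yx] := lerP x `|Y w|.
  by rewrite mem_set // mulr1 lerDl sqr_ge0.
rewrite memNset ?mulr0 ?add0r; last by rewrite /= leNgt Yx.
by rewrite -real_normK ?num_real // lerXn2r ?nnegrE ?normr_ge0 // ltW.
Qed.

Lemma tail_moment_ge0 (Y : T -> R) x : 0 <= tail_moment Y x.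
Proof. exact/fine_ge0/expectation_ge0/tail_sqr_ge0. Qed.

Variable Y : {RV P >-> R}.
Hypothesis Y_L2 : (Y : T -> R) \in Lfun P 2%:E.

Let mY : measurable_fun setT (Y : T -> R). Proof. exact: measurable_funPT. Qed.

Let mY2 : measurable_fun setT (fun w => Y w ^+ 2).
Proof. exact: measurable_funX. Qed.

Lemma measurable_tail_sqr x : measurable_fun setT (tail_sqr Y x).
Proof.
apply: measurable_funM => //; apply/measurable_indic.
have mnY := measurableT_comp (@normr_measurable R setT) mY.
have := measurable_fun_ler (f := cst x) (measurable_cst x) mnY measurableT
  (Y := [set true]).
by rewrite setTI; apply.
Qed.

Lemma tail_sqr_Lfun1 x : tail_sqr Y x \in Lfun P 1.
Proof.
apply/Lfun1_integrable.
apply: (le_integrable measurableT _ _ (Lfun2_integrable_sqr Y_L2)).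
  exact/measurable_EFinP/measurable_tail_sqr.
move=> w _ /=; rewrite lee_fin !ger0_norm ?sqr_ge0 ?tail_sqr_ge0 //.
exact: tail_sqr_le.
Qed.

Lemma fin_num_expectation_sqr : ('E_P[fun w => (Y w ^+ 2)%R] \is a fin_num)%E.
Proof.
rewrite unlock.
exact: (integrable_fin_num measurableT (Lfun2_integrable_sqr Y_L2)).
Qed.

Lemma fin_num_expectation_tail_sqr x : ('E_P[tail_sqr Y x] \is a fin_num)%E.
Proof. exact/expectation_fin_num/tail_sqr_Lfun1. Qed.

Lemma tail_moment_le_sigma2 x : tail_moment Y x <= sigma2 P Y.
Proof.
apply: (fine_le (fin_num_expectation_tail_sqr x) fin_num_expectation_sqr).
apply: expectation_le => //; first exact: measurable_tail_sqr.
- exact: tail_sqr_ge0.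
- by move=> w; rewrite sqr_ge0.
- exact/(aeW P)/tail_sqr_le.
Qed.

Lemma sigma2_le_tail_moment x :
  0 <= x -> sigma2 P Y <= tail_moment Y x + x ^+ 2.
Proof.
move=> x0; rewrite -lee_fin EFinD.
rewrite !fineK ?fin_num_expectation_sqr ?fin_num_expectation_tail_sqr //.
rewrite -(expectation_cst P) -expectationD ?Lfun_cst ?tail_sqr_Lfun1 //.
apply: expectation_le => //.
- by apply: measurable_funD => //; exact: measurable_tail_sqr.
- by move=> w; rewrite sqr_ge0.
- by move=> w; rewrite addr_ge0 ?tail_sqr_ge0 ?sqr_ge0.
- by apply: (aeW P) => w; exact: sqr_le_tail_sqr.
Qed.

End tail_moment.

Theorem lemma4 (R : realType) (d : measure_display) (T : measurableType d)
  (P : probability T R) (n : nat) (X : 'I_n -> {RV P >-> R})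
  (hind : mutually_independent X)
  (hL2 : forall k, (X k : T -> R) \in Lfun P 2%:E)
  (hmean : forall k, ('E_P[X k] = 0)%E)
  (hnorm : \sum_(k < n) sigma2 P (X k) = 1)
  (eps : R) (heps : 0 < eps) :
  \big[Num.max/0]_(k < n) sigma2 P (X k) <=
  alpha eps * sup [set (x * Lind X x) `^ (2 / 3) | x in `]0, eps]].
Proof.
have tail_le_Lind k x : tail_moment P (X k) x <= Lind X x.
  exact: ler_term_sum (fun i => tail_moment_ge0 P (X i) x).
have Lind_ge0 x : 0 <= Lind X x.
  by apply: sumr_ge0 => k _; exact: tail_moment_ge0.
have Lind_le1 x : Lind X x <= 1.
  rewrite -hnorm; apply: ler_sum => k _.
  exact: tail_moment_le_sigma2 (hL2 k) x.
apply: le_alpha_mul_sup => //.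
- exact: bigmax_ge_id.
- apply: bigmax_le => // k _; rewrite -hnorm.
  exact: ler_term_sum (fun i => sigma2_ge0 P (X i)).
- move=> x /andP[x_gt0 _]; rewrite lerBlDr; apply: bigmax_le => [|k _].
    by rewrite addr_ge0 ?sqr_ge0.
  apply: le_trans (sigma2_le_tail_moment _ _ (hL2 k) x (ltW x_gt0)) _.
  by rewrite lerD2r.
- exists (eps `^ (2 / 3)) => _ [x /andP[x_gt0 x_le_eps] <-].
  apply: (ge0_ler_powR _ _ _ (_ : x * Lind X x <= eps)) => //.
  + by rewrite nnegrE mulr_ge0 ?Lind_ge0 // ltW.
  + by rewrite nnegrE ltW.
  + by rewrite -[eps]mulr1 ler_pM ?Lind_ge0 ?Lind_le1 // ltW.
Qed.
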